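(* Let $\mathbb{F}$ be a field with $\mathrm{Char}(\mathbb{F})=2$. Every nontrivial $2$-dimensional associative algebra over $\mathbb{F}$ is isomorphic to exactly one of the following algebras (given by their matrices of structure constants): <ol> <li>$As_{12,2}^1=\begin{pmatrix}0&0&0&0\\1&0&0&0\end{pmatrix}$;</li> <li>$As_{11,2}^2(\beta_1)=\begin{pmatrix}0&1&1&0\\ \beta_1&0&0&1\end{pmatrix}$, $\beta_1\in\mathbb{F}$, where $As_{11,2}^2(\beta_1)\cong As_{11,2}^2(\beta_1')$ if and only if $\beta_1'=b^2(\beta_1+a^2)$ for some $a,b\in\mathbb{F}$, $b\neq0$;</li> <li>$As_{6,2}^3=\begin{pmatrix}1&0&0&0\\0&0&1&0\end{pmatrix}$;</li> <li>$As_{4,2}^4(\beta_1)=\begin{pmatrix}1&1&1&0\\ \beta_1&0&0&1\end{pmatrix}$, $\beta_1\in\mathbb{F}$, where $As_{4,2}^4(\beta_1)\cong As_{4,2}^4(\beta_1')$ if and only if $\beta_1'=\beta_1+a+a^2$ for some $a\in\mathbb{F}$;</li> <li>$As_{3,2}^5=\begin{pmatrix}1&0&0&0\\0&0&0&0\end{pmatrix}$;</li> <li>$As_{3,2}^6=\begin{pmatrix}1&0&0&0\\0&1&0&0\end{pmatrix}$.</li> </ol> Algebras from different items are pairwise non-isomorphic.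
   Context: Let $\mathbb{F}$ be a field. A $2$-dimensional algebra over $\mathbb{F}$ is a $2$-dimensional $\mathbb{F}$-vector space with a bilinear product; it is associative if $(xy)z=x(yz)$ for all $x,y,z$. Fix a basis $(e_1,e_2)$. The matrix of structure constants $\begin{pmatrix}\alpha_1&\alpha_2&\alpha_3&\alpha_4\\ \beta_1&\beta_2&\beta_3&\beta_4\end{pmatrix}$ denotes the algebra with $e_1e_1=\alpha_1e_1+\beta_1e_2$, $e_1e_2=\alpha_2e_1+\beta_2e_2$, $e_2e_1=\alpha_3e_1+\beta_3e_2$, $e_2e_2=\alpha_4e_1+\beta_4e_2$. An algebra is nontrivial if its product is not identically zero. Two algebras are isomorphic if there is an invertible linear map $f$ between them with $f(xy)=f(x)f(y)$ for all $x,y$. *)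

From HB Require Import structures.
From mathcomp Require Import all_boot all_order all_algebra.
Set Implicit Arguments. Unset Strict Implicit. Unset Printing Implicit Defensive.
Import Order.TTheory GRing.Theory Num.Theory.
Local Open Scope ring_scope.

(* A 2-dimensional algebra over F with fixed basis (e_1,e_2) is given by its
   2x4 matrix of structure constants A: row 0 = (alpha_1..alpha_4) (coefficients
   of e_1), row 1 = (beta_1..beta_4) (coefficients of e_2); column k (0-based)
   corresponds to the product e_i e_j with k = 2 i + j (i,j 0-based):
   e1e1, e1e2, e2e1, e2e2. *)

Definition sc_col (i j : 'I_2) : 'I_4 := inord (i * 2 + j)%N.

Definition amul (F : fieldType) (A : 'M[F]_(2,4)) (x y : 'rV[F]_2) : 'rV[F]_2 :=
  \row_(l < 2) \sum_(i < 2) \sum_(j < 2) x 0 i * y 0 j * A l (sc_col i j).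

Definition assoc_alg (F : fieldType) (A : 'M[F]_(2,4)) : Prop :=
  forall x y z, amul A (amul A x y) z = amul A x (amul A y z).

Definition nontrivial_alg (F : fieldType) (A : 'M[F]_(2,4)) : Prop :=
  exists x y, amul A x y <> 0.

Definition alg_iso (F : fieldType) (A B : 'M[F]_(2,4)) : Prop :=
  exists f : 'M[F]_2, f \in unitmx /\
    forall x y, amul A x y *m f = amul B (x *m f) (y *m f).

Definition mk_sc (F : fieldType) (a1 a2 a3 a4 b1 b2 b3 b4 : F) : 'M[F]_(2,4) :=
  \matrix_(i < 2, j < 4)
    (if i == 0 :> nat then nth 0 [:: a1; a2; a3; a4] j
     else nth 0 [:: b1; b2; b3; b4] j).

Definition As1 (F : fieldType) : 'M[F]_(2,4) := mk_sc 0 0 0 0 1 0 0 0.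
Definition As2 (F : fieldType) (b : F) : 'M[F]_(2,4) := mk_sc 0 1 1 0 b 0 0 1.
Definition As3 (F : fieldType) : 'M[F]_(2,4) := mk_sc 1 0 0 0 0 0 1 0.
Definition As4 (F : fieldType) (b : F) : 'M[F]_(2,4) := mk_sc 1 1 1 0 b 0 0 1.
Definition As5 (F : fieldType) : 'M[F]_(2,4) := mk_sc 1 0 0 0 0 0 0 0.
Definition As6 (F : fieldType) : 'M[F]_(2,4) := mk_sc 1 0 0 0 0 1 0 0.

Definition in_item (F : fieldType) (k : nat) (A : 'M[F]_(2,4)) : Prop :=
  match k with
  | 1 => A = As1 F
  | 2 => exists b : F, A = As2 b
  | 3 => A = As3 F
  | 4 => exists b : F, A = As4 b
  | 5 => A = As5 F
  | 6 => A = As6 F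
  | _ => False
  end.

From HB Require Import structures.
From mathcomp Require Import all_boot all_order all_algebra.
From mathcomp Require Import ring.
From Stdlib Require Import Classical.
Import GRing.Theory.

Set Implicit Arguments.
Unset Strict Implicit.
Unset Printing Implicit Defensive.
Local Open Scope ring_scope.

(* If some u is linearly independent of u^2, then (u, u^2) is a basis, and
   associativity gives u u^2 = u^2 u = p u + q u^2 and
   (u^2)^2 = p q u + (p + q^2) u^2.  For p = 0 this is As1 (q = 0) or As5;
   for p <> 0 the element (u^2 - q u) / p is an identity, and we get As2
   (q = 0) or As4(p / q^2).  Otherwise every square is a multiple of its root.
   Then either all squares vanish, and in dimension 2 so do all products, or
   some rescaled square is a nonzero idempotent e; the Peirce decomposition of
   a vector completing e to a basis yields As6, As3, As5 or As4(0), unless e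
   is an identity, which gives As2(0) or As4(0).
   In characteristic 2 the six items are separated by isomorphism invariants,
   and an isomorphism between two algebras of type 2 (or of type 4) fixes
   their common identity e2, so the image of e1 relates the parameters. *)

Section TwoDimensionalAlgebras.
Variable F : fieldType.
Implicit Types (A B : 'M[F]_(2,4)) (x y z u v w e : 'rV[F]_2) (a b c k : F).

Lemma sum_ord2 (G : 'I_2 -> F) : \sum_(i < 2) G i = G 0 + G 1.
Proof. by rewrite !big_ord_recl big_ord0 addr0; congr (_ + G _); apply: val_inj. Qed.

Lemma det_mx22 (M : 'M[F]_2) : \det M = M 0 0 * M 1 1 - M 0 1 * M 1 0.
Proof.
rewrite (expand_det_row _ 0) sum_ord2 /cofactor !det_mx11 !mxE /=.
have -> : lift (0 : 'I_2) (0 : 'I_1) = 1 by apply: val_inj.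
have -> : lift (1 : 'I_2) (0 : 'I_1) = 0 by apply: val_inj.
by rewrite expr0 expr1; ring.
Qed.

Definition row2 a b : 'rV[F]_2 := \row_j (if j == 0 then a else b).

Lemma rV2_ext x y : x 0 0 = y 0 0 -> x 0 1 = y 0 1 -> x = y.
Proof.
move=> e0 e1; apply/rowP => -[[|[|//]] lt].
  by rewrite (_ : Ordinal lt = 0) //; apply: val_inj.
by rewrite (_ : Ordinal lt = 1) //; apply: val_inj.
Qed.

Lemma row2_eq0 a b : (row2 a b == 0) = (a == 0) && (b == 0).
Proof.
apply/eqP/andP => [/rowP e | [/eqP-> /eqP->]]; last by apply: rV2_ext; rewrite !mxE.
by have := e 0; have := e 1; rewrite !mxE /= => -> ->.
Qed.

Definition det2 u v := u 0 0 * v 0 1 - u 0 1 * v 0 0.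

Lemma det2C u v : det2 v u = - det2 u v.
Proof. by rewrite /det2; ring. Qed.

Lemma det2_mulmx u v (M : 'M[F]_2) : det2 (u *m M) (v *m M) = det2 u v * \det M.
Proof. by rewrite /det2 det_mx22 !mxE !sum_ord2; ring. Qed.

Lemma det2_eq0_scale x y : x != 0 -> det2 x y = 0 -> exists k, y = k *: x.
Proof.
rewrite /det2 => x_neq0 /eqP; rewrite subr_eq0 => /eqP d.
have [x0|x0] := eqVneq (x 0 0) 0.
  have x1 : x 0 1 != 0.
    by apply: contra_neq x_neq0 => x1; apply: rV2_ext; rewrite !mxE.
  exists (y 0 1 / x 0 1); apply: rV2_ext; rewrite !mxE; last by field.
  by move: d; rewrite x0 mul0r => /eqP; rewrite eq_sym mulf_eq0 (negPf x1) => /eqP->; ring.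
exists (y 0 0 / x 0 0); apply: rV2_ext; rewrite !mxE; first by field.
by rewrite -[y 0 1](mulKf x0) d; field.
Qed.

Lemma det2_span u v x : det2 u v != 0 -> exists a b, x = a *: u + b *: v.
Proof.
move=> d; exists (det2 x v / det2 u v), (det2 u x / det2 u v).
by apply: rV2_ext; rewrite !mxE /det2; field.
Qed.

Lemma det2_compl x : x != 0 -> exists v, det2 x v != 0.
Proof.
move=> x_neq0; have [x1|x1] := eqVneq (x 0 1) 0.
  exists (row2 0 1); rewrite /det2 !mxE /= x1 mul0r subr0 mulr1.
  by apply: contra_neq x_neq0 => x0; apply: rV2_ext; rewrite !mxE.
by exists (row2 1 0); rewrite /det2 !mxE /= mulr0 sub0r mulr1 oppr_eq0.
Qed.

Definition basis_mx u v : 'M[F]_2 := \matrix_(i, j) (if i == 0 then u 0 j else v 0 j).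

Lemma basis_mx_unit u v : (basis_mx u v \in unitmx) = (det2 u v != 0).
Proof. by rewrite unitmxE unitfE det_mx22 !mxE. Qed.

Lemma mul_basis_mx u v x : x *m basis_mx u v = x 0 0 *: u + x 0 1 *: v.
Proof. by apply/rowP => j; rewrite !mxE sum_ord2 !mxE. Qed.

Lemma rV2_mulmx x (M : 'M[F]_2) :
  x *m M = x 0 0 *: (row2 1 0 *m M) + x 0 1 *: (row2 0 1 *m M).
Proof. by apply/rowP => j; rewrite !mxE !sum_ord2 !mxE /=; ring. Qed.

Lemma amulE A x y l : amul A x y 0 l =
  x 0 0 * y 0 0 * A l (sc_col 0 0) + x 0 0 * y 0 1 * A l (sc_col 0 1)
  + x 0 1 * y 0 0 * A l (sc_col 1 0) + x 0 1 * y 0 1 * A l (sc_col 1 1).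
Proof. by rewrite mxE !sum_ord2 addrA. Qed.

Lemma amul_mk_sc a1 a2 a3 a4 b1 b2 b3 b4 x y :
  amul (mk_sc a1 a2 a3 a4 b1 b2 b3 b4) x y =
  row2 (x 0 0 * y 0 0 * a1 + x 0 0 * y 0 1 * a2 + x 0 1 * y 0 0 * a3 + x 0 1 * y 0 1 * a4)
       (x 0 0 * y 0 0 * b1 + x 0 0 * y 0 1 * b2 + x 0 1 * y 0 0 * b3 + x 0 1 * y 0 1 * b4).
Proof. by apply: rV2_ext; rewrite amulE !mxE /= /sc_col !inordK. Qed.

Ltac coord_ring := apply/rowP => l; rewrite !(amulE, mxE); ring.

Lemma amulDl A x y z : amul A (x + y) z = amul A x z + amul A y z.
Proof. by coord_ring. Qed.
Lemma amulDr A x y z : amul A x (y + z) = amul A x y + amul A x z.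
Proof. by coord_ring. Qed.
Lemma amulZl A a x y : amul A (a *: x) y = a *: amul A x y.
Proof. by coord_ring. Qed.
Lemma amulZr A a x y : amul A x (a *: y) = a *: amul A x y.
Proof. by coord_ring. Qed.
Lemma amulNl A x y : amul A (- x) y = - amul A x y.
Proof. by coord_ring. Qed.
Lemma amulNr A x y : amul A x (- y) = - amul A x y.
Proof. by coord_ring. Qed.
Lemma amul0l A y : amul A 0 y = 0.
Proof. by coord_ring. Qed.
Lemma amul0r A x : amul A x 0 = 0.
Proof. by coord_ring. Qed.

Lemma alg_iso_sym A B : alg_iso A B -> alg_iso B A.
Proof.
case=> f [f_unit f_hom]; exists (invmx f); split; first by rewrite unitmx_inv.
move=> x y; have := f_hom (x *m invmx f) (y *m invmx f).
by rewrite !(mulmxKV f_unit) => <-; rewrite (mulmxK f_unit).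
Qed.

Lemma alg_iso_unit A B (f : 'M[F]_2) e e' : f \in unitmx ->
  (forall x y, amul A x y *m f = amul B (x *m f) (y *m f)) ->
  (forall x, amul A e x = x) -> (forall x, amul B x e' = x) -> e *m f = e'.
Proof.
move=> f_unit f_hom e_unit e'_unit.
have ef_unit y : amul B (e *m f) y = y by rewrite -(mulmxKV f_unit y) -f_hom e_unit.
by rewrite -[RHS]ef_unit e'_unit.
Qed.

Lemma alg_iso_basis A u v a1 a2 a3 a4 b1 b2 b3 b4 : det2 u v != 0 ->
  amul A u u = a1 *: u + b1 *: v -> amul A u v = a2 *: u + b2 *: v ->
  amul A v u = a3 *: u + b3 *: v -> amul A v v = a4 *: u + b4 *: v ->
  alg_iso A (mk_sc a1 a2 a3 a4 b1 b2 b3 b4).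
Proof.
move=> d uu uv vu vv; apply: alg_iso_sym; exists (basis_mx u v).
split=> [|x y]; first by rewrite basis_mx_unit.
rewrite !mul_basis_mx !(amulDl, amulDr, amulZl, amulZr) uu uv vu vv amul_mk_sc.
by apply/rowP => l; rewrite !mxE /=; ring.
Qed.

Ltac iso_of_basis := let d := fresh "d" in move=> d *; apply: (alg_iso_basis d);
  do ?[match goal with h : amul _ _ _ = _ |- _ => rewrite h end];
  by rewrite ?scale0r ?scale1r ?addr0 ?add0r.

Lemma alg_iso_As1 A u v : det2 u v != 0 -> amul A u u = v -> amul A u v = 0 ->
  amul A v u = 0 -> amul A v v = 0 -> alg_iso A (As1 F).
Proof. by iso_of_basis. Qed.

Lemma alg_iso_As2 A u v b : det2 u v != 0 -> amul A u u = b *: v ->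
  amul A u v = u -> amul A v u = u -> amul A v v = v -> alg_iso A (As2 b).
Proof. by iso_of_basis. Qed.

Lemma alg_iso_As3 A u v : det2 u v != 0 -> amul A u u = u -> amul A u v = 0 ->
  amul A v u = v -> amul A v v = 0 -> alg_iso A (As3 F).
Proof. by iso_of_basis. Qed.

Lemma alg_iso_As4 A u v b : det2 u v != 0 -> amul A u u = u + b *: v ->
  amul A u v = u -> amul A v u = u -> amul A v v = v -> alg_iso A (As4 b).
Proof. by iso_of_basis. Qed.

Lemma alg_iso_As5 A u v : det2 u v != 0 -> amul A u u = u -> amul A u v = 0 ->
  amul A v u = 0 -> amul A v v = 0 -> alg_iso A (As5 F).
Proof. by iso_of_basis. Qed.

Lemma alg_iso_As6 A u v : det2 u v != 0 -> amul A u u = u -> amul A u v = v ->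
  amul A v u = 0 -> amul A v v = 0 -> alg_iso A (As6 F).
Proof. by iso_of_basis. Qed.

Definition has_normal_form A : Prop :=
  exists k : nat, (1 <= k <= 6)%N /\ exists B, in_item k B /\ alg_iso A B.

Section Classification.
Variable A : 'M[F]_(2,4).
Hypothesis assocA : assoc_alg A.
Local Notation m := (amul A).

Ltac amul_lin := rewrite ?(amulDl, amulDr, amulNl, amulNr, amulZl, amulZr, amul0l, amul0r).
Ltac coord_field := apply/rowP => l; rewrite !mxE; field; do ?[apply/andP; split].

Lemma has_normal_formI (k : nat) B : (1 <= k <= 6)%N -> in_item k B -> alg_iso A B ->
  has_normal_form A.
Proof. by move=> k_range Bk AB; exists k; split=> //; exists B. Qed.

Section Generator.
Variables (u : 'rV[F]_2) (p q : F).
Local Notation w := (m u u).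
Hypothesis u_gen : det2 u w != 0.
Hypothesis u_cube : m u w = p *: u + q *: w.

Lemma square_square : m w w = (p * q) *: u + (p + q ^+ 2) *: w.
Proof. by rewrite assocA u_cube; amul_lin; rewrite u_cube; coord_ring. Qed.

Lemma normal_form_nil_generator : p = 0 -> has_normal_form A.
Proof.
move=> p0; have wu : m w u = q *: w by rewrite assocA u_cube p0 scale0r add0r.
have ww := square_square; rewrite p0 mul0r scale0r add0r add0r in ww.
have [q0|q_neq0] := eqVneq q 0.
  apply: (@has_normal_formI 1 (As1 F)) => //; apply: alg_iso_As1 u_gen _ _ _ _ => //.
  - by rewrite u_cube p0 q0 !scale0r addr0.
  - by rewrite wu q0 scale0r.
  - by rewrite ww q0 expr0n scale0r.
apply: (@has_normal_formI 5 (As5 F)) => //.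
(* w w = q^2 w, and u - w / q annihilates u and w on both sides. *)
apply: (@alg_iso_As5 _ (q ^- 2 *: w) (u - q^-1 *: w)); amul_lin.
- have -> : det2 (q ^- 2 *: w) (u - q^-1 *: w) = - q ^- 2 * det2 u w.
    by rewrite /det2 !mxE; ring.
  by rewrite mulf_neq0 ?oppr_eq0 ?invr_eq0 ?expf_neq0.
all: by rewrite ?wu ?u_cube ?ww ?p0; coord_field.
Qed.

Lemma normal_form_unital_generator : p != 0 -> has_normal_form A.
Proof.
move=> p_neq0; have wu : m w u = m u w by rewrite assocA.
have ww := square_square.
(* u (w - q u) = p u *)
have [e e_def] : exists e, e = p^-1 *: (w - q *: u) by eexists.
have eu : m e u = u by rewrite e_def; amul_lin; rewrite wu u_cube; coord_field.
have ue : m u e = u by rewrite e_def; amul_lin; rewrite u_cube; coord_field.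
have ee : m e e = e.
  have ew : m e w = w by rewrite -assocA eu.
  by rewrite {2}e_def; amul_lin; rewrite ew eu -e_def.
have [q0|q_neq0] := eqVneq q 0.
  apply: (@has_normal_formI 2 (As2 p)) => //; first by exists p.
  apply: (alg_iso_As2 _ _ ue eu ee).
    have -> : det2 u e = p^-1 * det2 u w by rewrite ?e_def /det2 !mxE; ring.
    by rewrite mulf_neq0 ?invr_eq0.
  by rewrite e_def q0; coord_field.
apply: (@has_normal_formI 4 (As4 (p / q ^+ 2))) => //; first by eexists.
apply: (@alg_iso_As4 _ (q^-1 *: u) e); amul_lin; rewrite ?ue ?eu ?ee //.
  have -> : det2 (q^-1 *: u) e = q^-1 * p^-1 * det2 u w by rewrite ?e_def /det2 !mxE; ring.
  by rewrite !mulf_neq0 ?invr_eq0.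
by rewrite e_def; coord_field.
Qed.

End Generator.

Lemma normal_form_of_generator u : det2 u (m u u) != 0 -> has_normal_form A.
Proof.
move=> u_gen; have [p [q u_cube]] := det2_span (m u (m u u)) u_gen.
have [p0|p_neq0] := eqVneq p 0.
  exact: normal_form_nil_generator u_gen u_cube p0.
exact: normal_form_unital_generator u_gen u_cube p_neq0.
Qed.

Lemma product_eq0_of_squares_eq0 : (forall x, m x x = 0) -> forall x y, m x y = 0.
Proof.
move=> sq0 x y; apply/eqP/contraT => xy_neq0.
have x_xy : m x (m x y) = 0 by rewrite -assocA sq0 amul0l.
have xy_y : m (m x y) y = 0 by rewrite assocA sq0 amul0r.
have [d|d] := eqVneq (det2 x y) 0.
  have [x0|x_neq0] := eqVneq x 0; first by rewrite x0 amul0l eqxx in xy_neq0.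
  have [k y_def] := det2_eq0_scale x_neq0 d.
  by rewrite y_def amulZr sq0 scaler0 eqxx in xy_neq0.
have [a [b xy_def]] := det2_span (m x y) d.
move: x_xy xy_y; rewrite xy_def; amul_lin; rewrite !sq0 !scaler0 add0r addr0.
move=> /eqP; rewrite scaler_eq0 (negPf xy_neq0) orbF => /eqP b0.
move=> /eqP; rewrite scaler_eq0 (negPf xy_neq0) orbF => /eqP a0.
by rewrite xy_def a0 b0 !scale0r addr0 eqxx in xy_neq0.
Qed.

Section Peirce.
Variable e : 'rV[F]_2.
Hypothesis e_idem : m e e = e.

(* The components of v in the Peirce spaces A_ij = {x | e x = i x, x e = j x}
   (the A_11 component being e v e). *)
Definition peirce10 v := m e v - m (m e v) e.
Definition peirce01 v := m v e - m (m e v) e.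
Definition peirce00 v := v - m e v - m v e + m (m e v) e.

Lemma peirce_decomp v : v = m (m e v) e + peirce10 v + peirce01 v + peirce00 v.
Proof. by rewrite /peirce10 /peirce01 /peirce00; coord_ring. Qed.

Ltac peirce_ring := amul_lin; rewrite !assocA ?e_idem -?(assocA e e) ?e_idem; coord_ring.

Lemma peirce10_left v : m e (peirce10 v) = peirce10 v.
Proof. by rewrite /peirce10; peirce_ring. Qed.
Lemma peirce10_right v : m (peirce10 v) e = 0.
Proof. by rewrite /peirce10; peirce_ring. Qed.
Lemma peirce01_left v : m e (peirce01 v) = 0.
Proof. by rewrite /peirce01; peirce_ring. Qed.
Lemma peirce01_right v : m (peirce01 v) e = peirce01 v.
Proof. by rewrite /peirce01; peirce_ring. Qed.
Lemma peirce00_left v : m e (peirce00 v) = 0.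
Proof. by rewrite /peirce00; peirce_ring. Qed.
Lemma peirce00_right v : m (peirce00 v) e = 0.
Proof. by rewrite /peirce00; peirce_ring. Qed.

End Peirce.

Lemma idempotent_collinear e w : e != 0 -> m e e = e -> det2 e w = 0 ->
  m e w = w /\ m w e = w.
Proof.
move=> e_neq0 e_idem d; have [k ->] := det2_eq0_scale e_neq0 d.
by rewrite amulZl amulZr e_idem.
Qed.

Section SquareParallel.
Hypothesis sq_par : forall x, det2 x (m x x) = 0.

Lemma square_scale x : exists k, m x x = k *: x.
Proof.
have [->|x_neq0] := eqVneq x 0; first by exists 0; rewrite amul0l scale0r.
exact: det2_eq0_scale x_neq0 (sq_par x).
Qed.

Lemma idempotent_of_square x : m x x != 0 -> exists2 e, e != 0 & m e e = e.
Proof.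
move=> xx_neq0; have [k xx] := square_scale x.
have k_neq0 : k != 0 by apply: contra_neq xx_neq0 => k0; rewrite xx k0 scale0r.
exists (k^-1 *: x); last by amul_lin; rewrite xx; coord_field.
rewrite scaler_eq0 invr_eq0 (negPf k_neq0) /=.
by apply: contra_neq xx_neq0 => ->; rewrite amul0l.
Qed.

Section Idempotent.
Variable e : 'rV[F]_2.
Hypotheses (e_neq0 : e != 0) (e_idem : m e e = e).

Lemma det2_idempotent_neq0 w : w != 0 -> m e w = 0 \/ m w e = 0 -> det2 e w != 0.
Proof.
move=> w_neq0 ann; apply/eqP => d; have [ew we] := idempotent_collinear e_neq0 e_idem d.
by case: ann; rewrite ?ew ?we => w0; rewrite w0 eqxx in w_neq0.
Qed.

Lemma normal_form_left_peirce w : w != 0 -> m e w = w -> m w e = 0 -> has_normal_form A.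
Proof.
move=> w_neq0 ew we; apply: (@has_normal_formI 6 (As6 F)) => //.
have ww : m w w = 0 by rewrite -{2}ew -assocA we amul0l.
have d : det2 e w != 0 by apply: det2_idempotent_neq0 w_neq0 _; right.
exact: alg_iso_As6 d e_idem ew we ww.
Qed.

Lemma normal_form_right_peirce w : w != 0 -> m e w = 0 -> m w e = w -> has_normal_form A.
Proof.
move=> w_neq0 ew we; apply: (@has_normal_formI 3 (As3 F)) => //.
have ww : m w w = 0 by rewrite -{1}we assocA ew amul0r.
have d : det2 e w != 0 by apply: det2_idempotent_neq0 w_neq0 _; left.
exact: alg_iso_As3 d e_idem ew we ww.
Qed.

Lemma normal_form_orthogonal (f : 'rV[F]_2) : f != 0 -> m e f = 0 -> m f e = 0 -> has_normal_form A.
Proof.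
move=> f_neq0 ef fe; have d : det2 e f != 0 by apply: det2_idempotent_neq0 f_neq0 _; left.
have [k ff] := square_scale f.
have [k0|k_neq0] := eqVneq k 0.
  apply: (@has_normal_formI 5 (As5 F)) => //.
  by apply: alg_iso_As5 d e_idem ef fe _; rewrite ff k0 scale0r.
apply: (@has_normal_formI 4 (As4 0)) => //; first by exists 0.
apply: (@alg_iso_As4 _ e (e + k^-1 *: f)); amul_lin; rewrite ?e_idem ?ef ?fe ?ff.
- have -> : det2 e (e + k^-1 *: f) = k^-1 * det2 e f by rewrite /det2 !mxE; ring.
  by rewrite mulf_neq0 ?invr_eq0.
- by rewrite scale0r addr0.
- by rewrite scaler0 addr0.
- by rewrite scaler0 addr0.
- by coord_field.
Qed.

Lemma normal_form_unital v : det2 e v != 0 -> m e v = v -> m v e = v -> has_normal_form A.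
Proof.
move=> d ev ve; have d' : det2 v e != 0 by rewrite det2C oppr_eq0.
have [k vv] := square_scale v.
have [k0|k_neq0] := eqVneq k 0.
  apply: (@has_normal_formI 2 (As2 0)) => //; first by exists 0.
  by apply: alg_iso_As2 d' _ ve ev e_idem; rewrite vv k0 !scale0r.
apply: (@has_normal_formI 4 (As4 0)) => //; first by exists 0.
apply: (@alg_iso_As4 _ (k^-1 *: v) e); amul_lin; rewrite ?e_idem ?ev ?ve ?vv //.
  have -> : det2 (k^-1 *: v) e = k^-1 * det2 v e by rewrite /det2 !mxE; ring.
  by rewrite mulf_neq0 ?invr_eq0.
by coord_field.
Qed.

Lemma normal_form_of_idempotent : has_normal_form A.
Proof.
have [v d] := det2_compl e_neq0.
have [w10_0|w10_neq0] := eqVneq (peirce10 e v) 0; last first.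
  exact: normal_form_left_peirce w10_neq0 (peirce10_left e_idem v) (peirce10_right e_idem v).
have [w01_0|w01_neq0] := eqVneq (peirce01 e v) 0; last first.
  exact: normal_form_right_peirce w01_neq0 (peirce01_left e_idem v) (peirce01_right e_idem v).
have [w00_0|w00_neq0] := eqVneq (peirce00 e v) 0; last first.
  exact: normal_form_orthogonal w00_neq0 (peirce00_left e_idem v) (peirce00_right e_idem v).
have v_def : v = m (m e v) e by rewrite {1}(peirce_decomp e v) w10_0 w01_0 w00_0 !addr0.
apply: (normal_form_unital d).
  by rewrite {1}v_def -!assocA e_idem -v_def.
by rewrite {1}v_def assocA e_idem -v_def.
Qed.

End Idempotent.
End SquareParallel.

End Classification.

Lemma classification A : assoc_alg A -> nontrivial_alg A -> has_normal_form A.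
Proof.
move=> assocA [x [y xy_neq0]].
have [[u u_gen]|no_gen] := classic (exists u, det2 u (amul A u u) != 0).
  exact: (normal_form_of_generator assocA u_gen).
have sq_par z : det2 z (amul A z z) = 0.
  by apply/eqP/contraT => d; case: no_gen; exists z.
have [[z zz_neq0]|sq_ne0] := classic (exists z, amul A z z != 0).
  have [e e_neq0 e_idem] := idempotent_of_square sq_par zz_neq0.
  exact: (normal_form_of_idempotent assocA sq_par e_neq0 e_idem).
case: xy_neq0; apply: product_eq0_of_squares_eq0 assocA _ x y => z.
by apply/eqP/contraT => zz_neq0; case: sq_ne0; exists z.
Qed.

Definition nil3 A := forall x y z, amul A (amul A x y) z = 0.
Definition unital A := exists e, forall x, amul A e x = x /\ amul A x e = x.
Definition squares_scalar A := forall x y, det2 (amul A (amul A x x) y) y = 0.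
Definition left_scalar A := forall x y, det2 (amul A x y) y = 0.
Definition right_scalar A := forall x y, det2 (amul A x y) x = 0.

Lemma alg_iso_invariants A B : alg_iso A B ->
  [/\ nil3 A -> nil3 B, unital A -> unital B, squares_scalar A -> squares_scalar B,
      left_scalar A -> left_scalar B & right_scalar A -> right_scalar B].
Proof.
case=> f [f_unit f_hom]; have pre x : x = x *m invmx f *m f by rewrite mulmxKV.
split=> [h x y z | [e e_unit] | h x y | h x y | h x y].
- by rewrite (pre x) (pre y) (pre z) -!f_hom h mul0mx.
- by exists (e *m f) => x; rewrite (pre x) -!f_hom; have [-> ->] := e_unit (x *m invmx f).
all: by rewrite (pre x) (pre y) -!f_hom det2_mulmx h mul0r.
Qed.

Lemma not_unital_of_annihilator A x : x != 0 ->
  (forall u, amul A u x = 0) \/ (forall u, amul A x u = 0) -> ~ unital A.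
Proof.
move=> /eqP x_neq0 ann [e /(_ x) [ex xe]]; apply: x_neq0.
by case: ann => ann; [rewrite -ex ann | rewrite -xe ann].
Qed.

Ltac mk_sc_eval := rewrite /As1 /As2 /As3 /As4 /As5 /As6 /det2 ?amul_mk_sc ?row2_eq0 ?mxE /=
  ?(mul0r, mulr0, mul1r, mulr1, add0r, addr0, subr0, sub0r, oppr_eq0, oner_eq0, eqxx, andbF, andFb).

Lemma mk_sc_unit_e2 a1 b1 x :
  amul (mk_sc a1 1 1 0 b1 0 0 1) (row2 0 1) x = x /\
  amul (mk_sc a1 1 1 0 b1 0 0 1) x (row2 0 1) = x.
Proof. by split; apply: rV2_ext; rewrite amul_mk_sc !mxE /=; ring. Qed.

Lemma nil3_As1 : nil3 (As1 F).
Proof. by move=> x y z; apply: rV2_ext; mk_sc_eval. Qed.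

Lemma not_nil3_As2 b : ~ nil3 (As2 b).
Proof. by move/(_ (row2 0 1) (row2 0 1) (row2 0 1))/eqP; mk_sc_eval. Qed.

Lemma not_nil3_As3 : ~ nil3 (As3 F).
Proof. by move/(_ (row2 1 0) (row2 1 0) (row2 1 0))/eqP; mk_sc_eval. Qed.

Lemma not_nil3_As4 b : ~ nil3 (As4 b).
Proof. by move/(_ (row2 0 1) (row2 0 1) (row2 0 1))/eqP; mk_sc_eval. Qed.

Lemma not_nil3_As5 : ~ nil3 (As5 F).
Proof. by move/(_ (row2 1 0) (row2 1 0) (row2 1 0))/eqP; mk_sc_eval. Qed.

Lemma not_nil3_As6 : ~ nil3 (As6 F).
Proof. by move/(_ (row2 1 0) (row2 1 0) (row2 1 0))/eqP; mk_sc_eval. Qed.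

Lemma unital_As2 b : unital (As2 b).
Proof. by exists (row2 0 1) => x; apply: mk_sc_unit_e2. Qed.

Lemma unital_As4 b : unital (As4 b).
Proof. by exists (row2 0 1) => x; apply: mk_sc_unit_e2. Qed.

Lemma not_unital_As3 : ~ unital (As3 F).
Proof.
apply: (@not_unital_of_annihilator _ (row2 0 1)); first by mk_sc_eval.
by left=> u; apply: rV2_ext; mk_sc_eval.
Qed.

Lemma not_unital_As5 : ~ unital (As5 F).
Proof.
apply: (@not_unital_of_annihilator _ (row2 0 1)); first by mk_sc_eval.
by left=> u; apply: rV2_ext; mk_sc_eval.
Qed.

Lemma not_unital_As6 : ~ unital (As6 F).
Proof.
apply: (@not_unital_of_annihilator _ (row2 0 1)); first by mk_sc_eval.
by right=> u; apply: rV2_ext; mk_sc_eval.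
Qed.

Lemma not_squares_scalar_As4 b : ~ squares_scalar (As4 b).
Proof. by move/(_ (row2 1 0) (row2 0 1))/eqP; mk_sc_eval. Qed.

Lemma right_scalar_As3 : right_scalar (As3 F).
Proof. by move=> x y; rewrite /det2 amul_mk_sc !mxE /=; ring. Qed.

Lemma not_right_scalar_As5 : ~ right_scalar (As5 F).
Proof. by move/(_ (row2 1 1) (row2 1 0))/eqP; mk_sc_eval. Qed.

Lemma not_right_scalar_As6 : ~ right_scalar (As6 F).
Proof. by move/(_ (row2 1 0) (row2 0 1))/eqP; mk_sc_eval. Qed.

Lemma left_scalar_As6 : left_scalar (As6 F).
Proof. by move=> x y; rewrite /det2 amul_mk_sc !mxE /=; ring. Qed.

Lemma not_left_scalar_As5 : ~ left_scalar (As5 F).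
Proof. by move/(_ (row2 1 0) (row2 1 1))/eqP; mk_sc_eval. Qed.

Section CharacteristicTwo.
Hypothesis char2 : 2 \in [pchar F].
Let two : 2 = 0 :> F := pcharf0 char2.

Lemma squares_scalar_As2 b : squares_scalar (As2 b).
Proof.
move=> x y; rewrite /det2 !amul_mk_sc !mxE /=.
transitivity (2 * (x 0 0 * x 0 1 * (y 0 1 ^+ 2 - b * y 0 0 ^+ 2))); first by ring.
by rewrite two mul0r.
Qed.

Definition item_signature (k : nat) A : Prop :=
  match k with
  | 1 => nil3 A
  | 2 => ~ nil3 A /\ unital A /\ squares_scalar A
  | 3 => ~ nil3 A /\ ~ unital A /\ right_scalar A
  | 4 => ~ nil3 A /\ unital A /\ ~ squares_scalar A
  | 5 => ~ nil3 A /\ ~ unital A /\ ~ right_scalar A /\ ~ left_scalar A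
  | 6 => ~ nil3 A /\ ~ unital A /\ ~ right_scalar A /\ left_scalar A
  | _ => False
  end.

Lemma in_item_signature (k : nat) A : in_item k A -> item_signature k A.
Proof.
case: k => [|[|[|[|[|[|[|k]]]]]]] //= => [->|[b ->]|->|[b ->]|->|->]; do ?apply: conj.
all: by [ exact: nil3_As1 | exact: not_nil3_As2 | exact: not_nil3_As3 | exact: not_nil3_As4
        | exact: not_nil3_As5 | exact: not_nil3_As6 | exact: unital_As2 | exact: unital_As4
        | exact: not_unital_As3 | exact: not_unital_As5 | exact: not_unital_As6
        | exact: squares_scalar_As2 | exact: not_squares_scalar_As4
        | exact: right_scalar_As3 | exact: not_right_scalar_As5 | exact: not_right_scalar_As6
        | exact: left_scalar_As6 | exact: not_left_scalar_As5 ].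
Qed.

Lemma items_not_iso (k l : nat) A B : k <> l ->
  in_item k A -> in_item l B -> ~ alg_iso A B.
Proof.
move=> kl /in_item_signature sigA /in_item_signature sigB AB.
case: (alg_iso_invariants AB) (alg_iso_invariants (alg_iso_sym AB)) => ? ? ? ? ? [? ? ? ? ?].
case: k kl sigA => [|[|[|[|[|[|[|k]]]]]]] kl //=;
case: l kl sigB => [|[|[|[|[|[|[|l]]]]]]] kl //=; tauto.
Qed.

Lemma alg_iso_As2_param b a c : c != 0 -> alg_iso (As2 b) (As2 (c ^+ 2 * (b + a ^+ 2))).
Proof.
move=> c_neq0; apply: (@alg_iso_As2 _ (row2 c (c * a)) (row2 0 1)).
- by rewrite /det2 !mxE /= mulr0 subr0 mulr1.
- by apply: rV2_ext; rewrite amul_mk_sc !mxE /=; ring: two.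
- exact: (mk_sc_unit_e2 _ _ _).2.
- exact: (mk_sc_unit_e2 _ _ _).1.
- exact: (mk_sc_unit_e2 _ _ _).1.
Qed.

Lemma alg_iso_As4_param b a : alg_iso (As4 b) (As4 (b + a + a ^+ 2)).
Proof.
apply: (@alg_iso_As4 _ (row2 1 a) (row2 0 1)).
- by rewrite /det2 !mxE /= mulr0 subr0 mulr1 oner_eq0.
- by apply: rV2_ext; rewrite amul_mk_sc !mxE /=; ring: two.
- exact: (mk_sc_unit_e2 _ _ _).2.
- exact: (mk_sc_unit_e2 _ _ _).1.
- exact: (mk_sc_unit_e2 _ _ _).1.
Qed.

(* As2 and As4 both have this shape, with identity e2. *)
Lemma alg_iso_fixes_unit_e2 b1 b1' a1 a1' (f : 'M[F]_2) : f \in unitmx ->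
  (forall x y, amul (mk_sc a1 1 1 0 b1 0 0 1) x y *m f =
               amul (mk_sc a1' 1 1 0 b1' 0 0 1) (x *m f) (y *m f)) ->
  row2 0 1 *m f = row2 0 1 /\ (row2 1 0 *m f) 0 0 != 0.
Proof.
move=> f_unit f_hom.
have fe2 := alg_iso_unit f_unit f_hom (fun x => (mk_sc_unit_e2 _ _ x).1)
  (fun x => (mk_sc_unit_e2 _ _ x).2).
split=> //; have := det2_mulmx (row2 1 0) (row2 0 1) f.
rewrite fe2; move: (row2 1 0 *m f) => h; rewrite /det2 !mxE /= !mulr0 !mulr1 !subr0 mul1r => ->.
by rewrite -unitfE -unitmxE.
Qed.

Lemma As2_iso_param b b' : alg_iso (As2 b) (As2 b') ->
  exists a c, c != 0 /\ b' = c ^+ 2 * (b + a ^+ 2).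
Proof.
case=> f [f_unit f_hom]; have [fe2 h0] := alg_iso_fixes_unit_e2 f_unit f_hom.
move: (f_hom (row2 1 0) (row2 1 0)); rewrite rV2_mulmx fe2.
move: (row2 1 0 *m f) h0 => h h0 /(congr1 (fun r : 'rV[F]_2 => r 0 1)).
rewrite !amul_mk_sc !mxE /= => hb.
exists (h 0 1), (h 0 0)^-1; split; first by rewrite invr_eq0.
have -> : b + h 0 1 ^+ 2 = b' * h 0 0 ^+ 2 by ring: two hb.
by field.
Qed.

Lemma As4_iso_param b b' : alg_iso (As4 b) (As4 b') -> exists a, b' = b + a + a ^+ 2.
Proof.
case=> f [f_unit f_hom]; have [fe2 h0] := alg_iso_fixes_unit_e2 f_unit f_hom.
move: (f_hom (row2 1 0) (row2 1 0)); rewrite rV2_mulmx fe2.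
move: (row2 1 0 *m f) h0 => h h0 hh.
have := congr1 (fun r : 'rV[F]_2 => r 0 0) hh; have := congr1 (fun r : 'rV[F]_2 => r 0 1) hh.
rewrite !amul_mk_sc !mxE /= !(mul0r, mulr0, mul1r, mulr1, addr0, add0r) => h1 h00.
have /eqP : h 0 0 * (h 0 0 - 1) = 0.
  transitivity (h 0 0 * h 0 0 + h 0 0 * h 0 1 + h 0 1 * h 0 0 - h 0 0 - 2 * (h 0 0 * h 0 1)).
    by ring.
  by rewrite -h00 two; ring.
rewrite mulf_eq0 (negPf h0) subr_eq0 /= => /eqP h00_1.
exists (h 0 1); have -> : b' = h 0 1 + b - h 0 1 ^+ 2 by rewrite h00_1 in h1; rewrite h1; ring.
by rewrite oppr_pchar2 //; ring.
Qed.

End CharacteristicTwo.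

End TwoDimensionalAlgebras.

Theorem mainTheorem2 (F : fieldType) (char2 : 2 \in [pchar F]) :
  (forall A : 'M[F]_(2,4), assoc_alg A -> nontrivial_alg A ->
     exists k, (1 <= k <= 6)%N /\ exists B, in_item k B /\ alg_iso A B)
  /\ (forall b b' : F, alg_iso (As2 b) (As2 b') <->
        exists a c : F, c != 0 /\ b' = c ^+ 2 * (b + a ^+ 2))
  /\ (forall b b' : F, alg_iso (As4 b) (As4 b') <->
        exists a : F, b' = b + a + a ^+ 2)
  /\ (forall (k l : nat) (A B : 'M[F]_(2,4)), k <> l ->
        in_item k A -> in_item l B -> ~ alg_iso A B).
Proof.
split; first exact: classification.
split.
  move=> b b'; split; first exact: As2_iso_param.
  by case=> a [c [c_neq0 ->]]; exact: alg_iso_As2_param.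
split.
  move=> b b'; split; first exact: As4_iso_param.
  by case=> a ->; exact: alg_iso_As4_param.
by move=> k l A B; exact: items_not_iso.
Qed.
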